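(* For strictly positive formulas $A,B$, $A\vdash_{\mathbf{RC\omega}}B$ iff $\mathrm{RC}\omega_S[A]\Vdash B$ (truth at the root), where $S=\ell(\{A,B\})$.
   Context: Strictly positive formulas: $A::= p\mid \top\mid (A\land B)\mid \alpha A$, $\alpha\le\omega$; $\ell(X)$ is the set of modalities occurring in formulas of $X$. $\mathbf{RC\omega}$: $A\vdash A$; $A\vdash\top$; cut; $A\land B\vdash A$; $A\land B\vdash B$; from $A\vdash B$, $A\vdash C$ infer $A\vdash B\land C$; from $A\vdash B$ infer $\alpha A\vdash\alpha B$; $\alpha\alpha A\vdash\alpha A$; $\alpha\beta A\vdash\beta A$, $\beta\alpha A\vdash\beta A$ for $\alpha\ge\beta$; $\alpha A\land\beta B\vdash\alpha(A\land\beta B)$ for $\alpha>\beta$; $\alpha A\vdash\beta A$ for $\alpha>\beta$; $\omega A\vdash A$. Kripke models of signature $S$: $W$, relations $(R_\alpha)_{\alpha\in S}$, valuation $v$; $x\Vdash\alpha A$ iff $\exists y(xR_\alpha y\wedge y\Vdash A)$. RC$_S$-frame: for $\alpha,\beta\in S$, $R_\alpha R_\beta\subseteq R_{\min(\alpha,\beta)}$; for $\alpha>\beta$, $xR_\alpha y\wedge xR_\beta z\Rightarrow yR_\beta z$; and $R_\alpha\subseteq R_\beta$ for $\beta<\alpha$. The canonical tree $T[A]$: for a variable or $\top$, one node with empty relations where only that variable is true; $T[B\land C]$: disjoint union of $T[B],T[C]$ with roots identified, a variable true at the root iff true at either root; $T[\alpha B]$: $T[B]$ plus a new root $r$ (all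 variables false) with $rR_\alpha$(root of $T[B]$). $\mathrm{RC}_S[A]$ ($S\supseteq\ell(A)$) is $T[A]$ with its relations replaced by the least relations containing them that form an RC$_S$-frame. $\mathrm{RC}\omega_S[A]$ has the frame of $\mathrm{RC}_S[A]$ and valuation $v'$ with $v'(x,p)=1$ iff $v(x,p)=1$ or there is $y$ with $xR_\omega y$ and $v(y,p)=1$, where $v$ is the valuation of $\mathrm{RC}_S[A]$. *)

From Stdlib Require Import List Arith.
Import ListNotations.

Inductive modality : Type := MFin (n : nat) | MOmega.

Definition mlt (a b : modality) : Prop :=
  match a, b with
  | MFin m, MFin n => m < n
  | MFin _, MOmega => True
  | MOmega, _ => False
  end.

Definition mle (a b : modality) : Prop := a = b \/ mlt a b.

Definition mmin (a b : modality) : modality :=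
  match a, b with
  | MFin m, MFin n => MFin (Nat.min m n)
  | MOmega, b => b
  | a, MOmega => a
  end.

Inductive fml : Type :=
| Var (p : nat)
| Top
| And (A B : fml)
| Dia (a : modality) (A : fml).

Fixpoint mods (A : fml) : list modality :=
  match A with
  | Var _ | Top => []
  | And B C => mods B ++ mods C
  | Dia a B => a :: mods B
  end.

Inductive deriv : fml -> fml -> Prop :=
| d_refl A : deriv A A
| d_top A : deriv A Top
| d_cut A B C : deriv A B -> deriv B C -> deriv A C
| d_andl A B : deriv (And A B) A
| d_andr A B : deriv (And A B) B
| d_andi A B C : deriv A B -> deriv A C -> deriv A (And B C)
| d_mono a A B : deriv A B -> deriv (Dia a A) (Dia a B)
| d_trans a A : deriv (Dia a (Dia a A)) (Dia a A)
| d_ge1 a b A : mle b a -> deriv (Dia a (Dia b A)) (Dia b A)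
| d_ge2 a b A : mle b a -> deriv (Dia b (Dia a A)) (Dia b A)
| d_j a b A B : mlt b a -> deriv (And (Dia a A) (Dia b B)) (Dia a (And A (Dia b B)))
| d_mon a b A : mlt b a -> deriv (Dia a A) (Dia b A)
| d_omega A : deriv (Dia MOmega A) A.

Fixpoint forces {W : Type} (R : modality -> W -> W -> Prop) (V : W -> nat -> Prop)
  (x : W) (A : fml) : Prop :=
  match A with
  | Var p => V x p
  | Top => True
  | And B C => forces R V x B /\ forces R V x C
  | Dia a B => exists y, R a x y /\ forces R V y B
  end.

(* Finite labelled trees: variables true at the root, and the list of
   children, each with the modality labelling the edge from the root. *)
Inductive tree : Type := Node (vs : list nat) (kids : list (modality * tree)).

Fixpoint T (A : fml) : tree :=
  match A with
  | Var p => Node [p] []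
  | Top => Node [] []
  | And B C =>
      match T B, T C with
      | Node v1 k1, Node v2 k2 => Node (v1 ++ v2) (k1 ++ k2)
      end
  | Dia a B => Node [] [(a, T B)]
  end.

(* Nodes are addressed by paths from the root (sequence of child indices). *)
Fixpoint subtree (t : tree) (x : list nat) : option tree :=
  match x with
  | [] => Some t
  | i :: x' =>
      match t with
      | Node _ ks =>
          match nth_error ks i with
          | Some (_, t') => subtree t' x'
          | None => None
          end
      end
  end.

Definition node (t : tree) : Type := { x : list nat | subtree t x <> None }.

Lemma root_valid (t : tree) : subtree t [] <> None.
Proof. discriminate. Qed.

Definition root (t : tree) : node t := exist _ [] (root_valid t).

Definition base_edge (t : tree) (a : modality) (x y : node t) : Prop :=
  exists i vs ks t', proj1_sig y = proj1_sig x ++ [i] /\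
    subtree t (proj1_sig x) = Some (Node vs ks) /\ nth_error ks i = Some (a, t').

Definition base_val (t : tree) (x : node t) (p : nat) : Prop :=
  exists vs ks, subtree t (proj1_sig x) = Some (Node vs ks) /\ In p vs.

Inductive RCrel (S : list modality) (t : tree) : modality -> node t -> node t -> Prop :=
| rc_base a x y : base_edge t a x y -> RCrel S t a x y
| rc_comp a b x y z : In a S -> In b S ->
    RCrel S t a x y -> RCrel S t b y z -> RCrel S t (mmin a b) x z
| rc_eucl a b x y z : In a S -> In b S -> mlt b a ->
    RCrel S t a x y -> RCrel S t b x z -> RCrel S t b y z
| rc_incl a b x y : In a S -> In b S -> mlt b a ->
    RCrel S t a x y -> RCrel S t b x y.

(* RC_S[A] : frame RCrel S (T A) with valuation base_val (T A).
   RC-omega_S[A] : same frame, valuation v'. *)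
Definition RCw_val (S : list modality) (A : fml) (x : node (T A)) (p : nat) : Prop :=
  base_val (T A) x p \/
  exists y, RCrel S (T A) MOmega x y /\ base_val (T A) y p.

(* Every derivation is valid over all RC_L-frames whose valuation is
   inherited backwards along R_omega, for the list L of modalities its axioms
   use ([soundness]).  The model RC-omega_S[A] is such a model for L = S, and
   any RC_S-model extends, one new modality at a time, to an RC_(L++S)-model
   that agrees with it on S ([frame_extension]); as A and B only mention S,
   the root of RC-omega_S[A], which forces A, forces B.

   Closed theories, related by "D is an a-successor of G",
   form a canonical RC-omega model satisfying a truth lemma
   ([theory_truth]).  Starting from the theory of A, successor theories label
   the canonical tree T[A] ([T_labelling]); by leastness of the RC_S-closure
   this labelling is a homomorphism out of RC-omega_S[A] ([RCrel_least]), so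
   every B forced at the root lies in the theory of A. *)

From Stdlib Require Import List Arith Lia Relations.
Import ListNotations.

(** * The order on modalities *)

Definition mod_eq_dec (a b : modality) : {a = b} + {a <> b}.
Proof. decide equality; apply Nat.eq_dec. Defined.

Lemma mlt_dec (a b : modality) : {mlt a b} + {~ mlt a b}.
Proof.
  destruct a as [m|], b as [n|]; simpl;
    [apply lt_dec | left; exact I | right; tauto | right; tauto].
Qed.

Lemma mlt_total (a b : modality) : mlt a b \/ a = b \/ mlt b a.
Proof.
  destruct a as [m|], b as [n|]; simpl; auto.
  destruct (lt_eq_lt_dec m n) as [[H|H]|H]; subst; auto.
Qed.

Lemma mlt_trans (a b c : modality) : mlt a b -> mlt b c -> mlt a c.
Proof. destruct a as [m|], b as [n|], c as [k|]; simpl; intros; tauto || lia. Qed.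

Lemma mlt_irrefl (a : modality) : ~ mlt a a.
Proof. destruct a; simpl; [lia | tauto]. Qed.

Lemma mle_mlt_cases (a b : modality) : mle a b \/ mlt b a.
Proof. unfold mle; destruct (mlt_total a b) as [H|[H|H]]; auto. Qed.

Lemma mmin_id (a : modality) : mmin a a = a.
Proof. destruct a; simpl; [rewrite Nat.min_id|]; reflexivity. Qed.

Lemma mmin_l (a b : modality) : mle a b -> mmin a b = a.
Proof.
  intros [<-|H]; [apply mmin_id|].
  destruct a as [m|], b as [n|]; simpl in *; try tauto; try reflexivity.
  f_equal; lia.
Qed.

Lemma mmin_r (a b : modality) : mle b a -> mmin a b = b.
Proof.
  intros [<-|H]; [apply mmin_id|].
  destruct a as [m|], b as [n|]; simpl in *; try tauto; try reflexivity.
  f_equal; lia.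
Qed.

Lemma mmin_in (a b : modality) (L : list modality) :
  In a L -> In b L -> In (mmin a b) L.
Proof.
  destruct (mle_mlt_cases a b) as [H|H];
    [rewrite mmin_l | rewrite mmin_r by (right; exact H)]; auto.
Qed.

Lemma mlt_mmin (a b c : modality) : mlt c (mmin a b) -> mlt c a /\ mlt c b.
Proof.
  destruct (mle_mlt_cases a b) as [H|H];
    [rewrite mmin_l by exact H | rewrite mmin_r by (right; exact H)];
    intros Hc; split; auto.
  - destruct H as [<-|H]; auto; eapply mlt_trans; eauto.
  - eapply mlt_trans; eauto.
Qed.

(** * Soundness for RC_L-frames *)

Record RCframe {W : Type} (L : list modality) (R : modality -> W -> W -> Prop) : Prop := {
  frame_comp : forall a b x y z, In a L -> In b L ->
    R a x y -> R b y z -> R (mmin a b) x z;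
  frame_eucl : forall a b x y z, In a L -> In b L -> mlt b a ->
    R a x y -> R b x z -> R b y z;
  frame_incl : forall a b x y, In a L -> In b L -> mlt b a ->
    R a x y -> R b x y }.

(* The valuation condition of RC-omega models: truth is inherited along R_omega
   backwards (this makes the axiom <omega>A |- A sound). *)
Definition omega_persistent {W : Type} (R : modality -> W -> W -> Prop)
  (V : W -> nat -> Prop) : Prop :=
  forall x y p, R MOmega x y -> V y p -> V x p.

Definition entails (L : list modality) (F G : fml) : Prop :=
  forall (W : Type) (R : modality -> W -> W -> Prop) (V : W -> nat -> Prop),
    RCframe L R -> omega_persistent R V -> forall x, forces R V x F -> forces R V x G.

Lemma RCframe_mono {W : Type} (L1 L2 : list modality) (R : modality -> W -> W -> Prop) :
  incl L1 L2 -> RCframe L2 R -> RCframe L1 R.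
Proof.
  intros Hi [Hc He Hn]; split; intros.
  - apply Hc with y; auto.
  - apply He with a x; auto.
  - apply Hn with a; auto.
Qed.

Lemma entails_mono (L1 L2 : list modality) (F G : fml) :
  incl L1 L2 -> entails L1 F G -> entails L2 F G.
Proof. intros Hi H W R V HF; apply H; eapply RCframe_mono; eauto. Qed.

Lemma forces_omega_persistent {W : Type} (L : list modality)
  (R : modality -> W -> W -> Prop) (V : W -> nat -> Prop) :
  RCframe L R -> omega_persistent R V -> In MOmega L ->
  forall F, incl (mods F) L ->
  forall x y, R MOmega x y -> forces R V y F -> forces R V x F.
Proof.
  intros HF HO Hw F; induction F as [p| |F1 IH1 F2 IH2|a F IH];
    simpl; intros Hi x y Hxy Hy.
  - eapply HO; eauto.
  - exact I.
  - destruct Hy; split; [eapply IH1 | eapply IH2]; eauto;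
      intros u Hu; apply Hi, in_or_app; auto.
  - destruct Hy as [z [Hz HzF]]; exists z; split; auto.
    exact (frame_comp _ _ HF MOmega a x y z Hw (Hi a (or_introl eq_refl)) Hxy Hz).
Qed.

Lemma soundness (F G : fml) : deriv F G -> exists L, entails L F G.
Proof.
  induction 1 as [ | | F G H _ [L1 H1] _ [L2 H2] | | | F G H _ [L1 H1] _ [L2 H2]
                 | a F G _ [L H1] | a F | a b F Hab | a b F Hab | a b F G Hab | a b F Hab | F].
  - exists []; intros W R V _ _ x Hx; exact Hx.
  - exists []; intros W R V _ _ x _; exact I.
  - exists (L1 ++ L2); intros W R V HF HO x Hx.
    apply (entails_mono L2 (L1 ++ L2)) in H2; [|apply incl_appr, incl_refl].
    apply (entails_mono L1 (L1 ++ L2)) in H1; [|apply incl_appl, incl_refl].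
    eauto.
  - exists []; intros W R V _ _ x Hx; apply Hx.
  - exists []; intros W R V _ _ x Hx; apply Hx.
  - exists (L1 ++ L2); intros W R V HF HO x Hx.
    apply (entails_mono L2 (L1 ++ L2)) in H2; [|apply incl_appr, incl_refl].
    apply (entails_mono L1 (L1 ++ L2)) in H1; [|apply incl_appl, incl_refl].
    split; eauto.
  - exists L; intros W R V HF HO x [y [Hy HA]]; exists y; split; eauto.
  - exists [a]; intros W R V HF HO x [y [Hy [z [Hz HA]]]]; exists z; split; auto.
    rewrite <- (mmin_id a); apply (frame_comp _ _ HF) with y; simpl; auto.
  - exists [a; b]; intros W R V HF HO x [y [Hy [z [Hz HA]]]]; exists z; split; auto.
    rewrite <- (mmin_r a b Hab); apply (frame_comp _ _ HF) with y; simpl; auto.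
  - exists [a; b]; intros W R V HF HO x [y [Hy [z [Hz HA]]]]; exists z; split; auto.
    rewrite <- (mmin_l b a Hab); apply (frame_comp _ _ HF) with y; simpl; auto.
  - exists [a; b]; intros W R V HF HO x [[y [Hy HA]] [z [Hz HB]]].
    exists y; repeat split; auto; exists z; split; auto.
    apply (frame_eucl _ _ HF) with a x; simpl; auto.
  - exists [a; b]; intros W R V HF HO x [y [Hy HA]]; exists y; split; auto.
    apply (frame_incl _ _ HF) with a; simpl; auto.
  - exists (MOmega :: mods F); intros W R V HF HO x [y [Hy HA]].
    eapply forces_omega_persistent; eauto; [left; reflexivity | intros u Hu; right; exact Hu].
Qed.

(** * Extending an RC_S-frame by one modality *)

(* Over an RC_S-frame R, a new modality c is interpreted by the transitive
   closure of the "sibling step" y ~ z: z is an R_t-successor of y or of an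
   R_t-predecessor of y, where t is the least modality of S above c (there is
   no step when S has nothing above c).  This yields an RC_{c::S}-frame that
   agrees with R on S, so that derivations using modalities outside S remain
   sound on RC_S-frames. *)

Definition least_above (S : list modality) (c t : modality) : Prop :=
  In t S /\ mlt c t /\ forall u, In u S -> mlt c u -> mle t u.

Lemma least_above_cases (S : list modality) (c : modality) :
  (exists t, least_above S c t) \/ (forall u, In u S -> ~ mlt c u).
Proof.
  induction S as [|h S [[t [Ht [Hct Hmin]]] | Hnone]].
  - right; intros u [].
  - left; destruct (mlt_dec c h) as [Hch|Hch]; [destruct (mlt_dec h t) as [Hht|Hht]|].
    + exists h; repeat split; [left; reflexivity | exact Hch |].
      intros u [<-|Hu] Hcu; [left; reflexivity|].
      destruct (Hmin u Hu Hcu) as [<-|H]; right; [exact Hht | eapply mlt_trans; eauto].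
    + exists t; repeat split; [right; exact Ht | exact Hct |].
      intros u [<-|Hu] Hcu; auto.
      destruct (mle_mlt_cases t h) as [H|H]; [exact H | contradiction].
    + exists t; repeat split; [right; exact Ht | exact Hct |].
      intros u [<-|Hu] Hcu; [contradiction | auto].
  - destruct (mlt_dec c h) as [Hch|Hch].
    + left; exists h; repeat split; [left; reflexivity | exact Hch |].
      intros u [<-|Hu] Hcu; [left; reflexivity | exfalso; exact (Hnone u Hu Hcu)].
    + right; intros u [<-|Hu]; auto.
Qed.

Section Extension.

Variables (W : Type) (R : modality -> W -> W -> Prop) (S : list modality) (c : modality).
Hypothesis HF : RCframe S R.
Hypothesis c_new : ~ In c S.

Definition sibling_step (y z : W) : Prop :=
  exists t x, least_above S c t /\ (x = y \/ R t x y) /\ R t x z.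

Definition Rc : W -> W -> Prop := clos_trans W sibling_step.

Definition Rext (a : modality) (x y : W) : Prop :=
  if mod_eq_dec a c then Rc x y else R a x y.

Lemma Rext_new (x y : W) : Rext c x y <-> Rc x y.
Proof. unfold Rext; destruct (mod_eq_dec c c); tauto. Qed.

Lemma Rext_old (a : modality) (x y : W) : In a S -> (Rext a x y <-> R a x y).
Proof.
  intros Ha; unfold Rext; destruct (mod_eq_dec a c); [subst; contradiction | tauto].
Qed.

Lemma frame_incl_le (a b : modality) (x y : W) :
  In a S -> In b S -> mle b a -> R a x y -> R b x y.
Proof. intros Ha Hb [<-|H] Hr; [exact Hr | exact (frame_incl _ _ HF a b x y Ha Hb H Hr)]. Qed.

Lemma frame_trans (a : modality) (x y z : W) : In a S -> R a x y -> R a y z -> R a x z.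
Proof. intros Ha H1 H2; rewrite <- (mmin_id a); exact (frame_comp _ _ HF a a x y z Ha Ha H1 H2). Qed.

Lemma Rc_low (b : modality) (y z : W) : In b S -> mlt b c -> Rc y z -> R b y z.
Proof.
  intros Hb Hbc H; induction H as [y z [t [x [[Ht [Hct _]] [Hx Hxz]]]] | x y z _ IH1 _ IH2].
  - assert (Hbt : mlt b t) by (eapply mlt_trans; eauto).
    assert (Hbz : R b x z) by (apply (frame_incl_le t); auto; right; exact Hbt).
    destruct Hx as [<-|Hxy]; [exact Hbz | exact (frame_eucl _ _ HF t b x y z Ht Hb Hbt Hxy Hbz)].
  - eapply frame_trans; eauto.
Qed.

Lemma Rc_high (a : modality) (y z : W) : In a S -> mlt c a -> R a y z -> Rc y z.
Proof.
  intros Ha Hca Hr.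
  destruct (least_above_cases S c) as [[t Hleast] | Hnone]; [| exfalso; exact (Hnone a Ha Hca)].
  destruct Hleast as [Ht [Hct Hmin]].
  apply t_step; exists t, y; repeat split; auto.
  apply (frame_incl_le a); auto.
Qed.

Lemma Rc_eucl_low (b : modality) (x y z : W) :
  In b S -> mlt b c -> Rc x y -> R b x z -> R b y z.
Proof.
  intros Hb Hbc H; revert z; induction H as [x y [t [w [[Ht [Hct _]] [Hw Hwy]]]] | ]; intros v Hxz; auto.
  assert (Hbt : mlt b t) by (eapply mlt_trans; eauto).
  apply (frame_eucl _ _ HF t b w y v Ht Hb Hbt Hwy).
  destruct Hw as [<-|Hwx]; [exact Hxz|].
  rewrite <- (mmin_r t b) by (right; exact Hbt); exact (frame_comp _ _ HF t b w x v Ht Hb Hwx Hxz).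
Qed.

Lemma Rc_eucl_high (a : modality) (x y z : W) :
  In a S -> mlt c a -> R a x y -> Rc x z -> Rc y z.
Proof.
  intros Ha Hca Hxy H; revert y Hxy.
  induction H as [x z [t [w [[Ht [Hct Hmin]] [Hw Hwz]]]] | x m z _ IH1 Hmz _];
    intros v Hxv; [| exact (t_trans _ _ v m z (IH1 v Hxv) Hmz)].
  assert (Rt : R t x v) by (apply (frame_incl_le a); auto).
  apply t_step; exists t, w; split; [repeat split; auto | split; [right | exact Hwz]].
  destruct Hw as [<-|Hwx]; [exact Rt | exact (frame_trans t w x v Ht Hwx Rt)].
Qed.

Lemma Rext_comp (a b : modality) (x y z : W) : In a (c :: S) -> In b (c :: S) ->
  Rext a x y -> Rext b y z -> Rext (mmin a b) x z.
Proof.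
  intros [<-|Ha] [<-|Hb]; rewrite ?Rext_new, ?Rext_old by assumption; intros Hxy Hyz.
  - rewrite mmin_id, Rext_new; eapply t_trans; eauto.
  - destruct (mlt_total c b) as [H|[E|H]]; [| subst b; contradiction |].
    + rewrite mmin_l, Rext_new by (right; exact H).
      eapply t_trans; [exact Hxy | eapply Rc_high; eauto].
    + rewrite mmin_r, Rext_old by (auto || (right; exact H)).
      eapply frame_trans; eauto; eapply Rc_low; eauto.
  - destruct (mlt_total a c) as [H|[E|H]]; [| subst a; contradiction |].
    + rewrite mmin_l, Rext_old by (auto || (right; exact H)).
      eapply frame_trans; eauto; eapply Rc_low; eauto.
    + rewrite mmin_r, Rext_new by (right; exact H).
      eapply t_trans; [eapply Rc_high; eauto | exact Hyz].
  - rewrite Rext_old by (apply mmin_in; auto).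
    exact (frame_comp _ _ HF a b x y z Ha Hb Hxy Hyz).
Qed.

Lemma Rext_eucl (a b : modality) (x y z : W) : In a (c :: S) -> In b (c :: S) -> mlt b a ->
  Rext a x y -> Rext b x z -> Rext b y z.
Proof.
  intros [<-|Ha] [<-|Hb] Hba; rewrite ?Rext_new, ?Rext_old by assumption; intros Hxy Hxz.
  - exfalso; exact (mlt_irrefl _ Hba).
  - eapply Rc_eucl_low; eauto.
  - eapply Rc_eucl_high; eauto.
  - exact (frame_eucl _ _ HF a b x y z Ha Hb Hba Hxy Hxz).
Qed.

Lemma Rext_incl (a b : modality) (x y : W) : In a (c :: S) -> In b (c :: S) -> mlt b a ->
  Rext a x y -> Rext b x y.
Proof.
  intros [<-|Ha] [<-|Hb] Hba; rewrite ?Rext_new, ?Rext_old by assumption; intros Hxy.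
  - exfalso; exact (mlt_irrefl _ Hba).
  - eapply Rc_low; eauto.
  - eapply Rc_high; eauto.
  - exact (frame_incl _ _ HF a b x y Ha Hb Hba Hxy).
Qed.

Lemma Rext_frame : RCframe (c :: S) Rext.
Proof. split; [apply Rext_comp | apply Rext_eucl | apply Rext_incl]. Qed.

(* Nothing lies above omega, so a new omega has the empty relation. *)
Lemma Rext_omega_persistent (V : W -> nat -> Prop) :
  omega_persistent R V -> omega_persistent Rext V.
Proof.
  intros HO x y p H; destruct (mod_eq_dec MOmega c) as [E|E].
  - rewrite E, Rext_new in H; exfalso.
    induction H as [x y [t [_ [[_ [Hct _]] _]]] | ]; [rewrite <- E in Hct; exact Hct | assumption].
  - unfold Rext in H; destruct (mod_eq_dec MOmega c); [contradiction | eapply HO; eauto].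
Qed.

End Extension.

Lemma frame_extension_step {W : Type} (R : modality -> W -> W -> Prop)
  (V : W -> nat -> Prop) (S : list modality) (c : modality) :
  RCframe S R -> omega_persistent R V ->
  exists R', RCframe (c :: S) R' /\ omega_persistent R' V /\
             (forall a x y, In a S -> (R' a x y <-> R a x y)).
Proof.
  intros HF HO; destruct (in_dec mod_eq_dec c S) as [Hin|Hnew].
  - exists R; split; [|split; [exact HO | tauto]].
    eapply RCframe_mono; [|exact HF]; intros u [<-|Hu]; auto.
  - exists (Rext W R S c); split; [|split].
    + apply Rext_frame; auto.
    + apply Rext_omega_persistent; auto.
    + intros a x y Ha; apply Rext_old; auto; intros <-; contradiction.
Qed.

Lemma frame_extension {W : Type} (L : list modality) (R : modality -> W -> W -> Prop)
  (V : W -> nat -> Prop) (S : list modality) :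
  RCframe S R -> omega_persistent R V ->
  exists R', RCframe (L ++ S) R' /\ omega_persistent R' V /\
             (forall a x y, In a S -> (R' a x y <-> R a x y)).
Proof.
  intros HF HO; induction L as [|c L [R1 [HF1 [HO1 HA1]]]].
  - exists R; simpl; split; [exact HF | split; [exact HO | tauto]].
  - destruct (frame_extension_step R1 V (L ++ S) c HF1 HO1) as [R2 [HF2 [HO2 HA2]]].
    exists R2; split; [exact HF2 | split; [exact HO2 |]].
    intros a x y Ha; rewrite HA2 by (apply in_or_app; right; exact Ha); apply HA1, Ha.
Qed.

Lemma forces_agree {W : Type} (R R' : modality -> W -> W -> Prop) (V : W -> nat -> Prop)
  (S : list modality) :
  (forall a x y, In a S -> (R' a x y <-> R a x y)) ->
  forall F, incl (mods F) S -> forall x, forces R' V x F <-> forces R V x F.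
Proof.
  intros HA F; induction F as [p| |F1 IH1 F2 IH2|a F IH]; simpl; intros Hi x.
  - tauto.
  - tauto.
  - rewrite IH1, IH2; [tauto| |]; intros u Hu; apply Hi, in_or_app; auto.
  - assert (Ha : In a S) by (apply Hi; left; reflexivity).
    assert (HiF : incl (mods F) S) by (intros u Hu; apply Hi; right; exact Hu).
    split; intros [y [Hy HF]]; exists y; split;
      solve [apply HA; auto | apply IH; auto].
Qed.

Lemma entails_RCS_model {W : Type} (L S : list modality) (R : modality -> W -> W -> Prop)
  (V : W -> nat -> Prop) (F G : fml) :
  entails L F G -> RCframe S R -> omega_persistent R V ->
  incl (mods F) S -> incl (mods G) S -> forall x, forces R V x F -> forces R V x G.
Proof.
  intros HFG HF HO HiF HiG x Hx.
  destruct (frame_extension L R V S HF HO) as [R' [HF' [HO' HA']]].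
  apply (forces_agree R R' V S HA' G HiG).
  apply (HFG W R' V); [eapply RCframe_mono; [apply incl_appl, incl_refl | exact HF'] | exact HO' |].
  apply (forces_agree R R' V S HA' F HiF), Hx.
Qed.

(** * The canonical tree T[A] *)

Definition tvals (t : tree) : list nat := match t with Node vs _ => vs end.
Definition tkids (t : tree) : list (modality * tree) := match t with Node _ ks => ks end.

Lemma T_And (A1 A2 : fml) :
  T (And A1 A2) = Node (tvals (T A1) ++ tvals (T A2)) (tkids (T A1) ++ tkids (T A2)).
Proof. simpl; destruct (T A1), (T A2); reflexivity. Qed.

Lemma subtree_merge (t1 t2 : tree) (j : nat) (x : list nat) :
  subtree (Node (tvals t1 ++ tvals t2) (tkids t1 ++ tkids t2)) (j :: x) =
  if j <? length (tkids t1) then subtree t1 (j :: x)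
  else subtree t2 ((j - length (tkids t1)) :: x).
Proof.
  destruct t1 as [v1 k1], t2 as [v2 k2]; simpl.
  destruct (Nat.ltb_spec j (length k1));
    [rewrite nth_error_app1 | rewrite nth_error_app2]; auto.
Qed.

Lemma subtree_app (t : tree) (x y : list nat) :
  subtree t (x ++ y) = match subtree t x with Some s => subtree s y | None => None end.
Proof.
  revert t; induction x as [|i x IH]; intros [vs ks]; simpl; [reflexivity|].
  destruct (nth_error ks i) as [[a t']|]; auto.
Qed.

Definition labelling {X : Type} (E : modality -> X -> X -> Prop) (Val : X -> nat -> Prop)
  (t : tree) (f : list nat -> X) : Prop :=
  (forall x vs ks i a t', subtree t x = Some (Node vs ks) ->
     nth_error ks i = Some (a, t') -> E a (f x) (f (x ++ [i]))) /\
  (forall x vs ks p, subtree t x = Some (Node vs ks) -> In p vs -> Val (f x) p).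

Section Labellings.

Variables (X : Type) (E : modality -> X -> X -> Prop) (Val : X -> nat -> Prop).

Lemma labelling_leaf (vs : list nat) (G : X) :
  (forall p, In p vs -> Val G p) -> labelling E Val (Node vs []) (fun _ => G).
Proof.
  intros HV; split.
  - intros [|j x] vs' ks i a t' Hs Hn; simpl in Hs;
      [injection Hs as <- <-; destruct i | destruct j]; discriminate.
  - intros [|j x] vs' ks p Hs Hp; simpl in Hs;
      [injection Hs as <- <-; auto | destruct j; discriminate].
Qed.

Lemma labelling_dia (a : modality) (t : tree) (G : X) (f : list nat -> X) :
  E a G (f []) -> labelling E Val t f ->
  labelling E Val (Node [] [(a, t)]) (fun x => match x with 0 :: x' => f x' | _ => G end).
Proof.
  intros Ha [He Hv]; split.
  - intros [|[|j] x] vs ks i b t' Hs Hn; simpl in Hs.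
    + injection Hs as <- <-; destruct i as [|[|i]]; try discriminate.
      injection Hn as <- <-; exact Ha.
    + exact (He x vs ks i b t' Hs Hn).
    + destruct j; discriminate.
  - intros [|[|j] x] vs ks p Hs Hp; simpl in Hs.
    + injection Hs as <- <-; destruct Hp.
    + exact (Hv x vs ks p Hs Hp).
    + destruct j; discriminate.
Qed.

Lemma labelling_merge (t1 t2 : tree) (f1 f2 : list nat -> X) :
  f1 [] = f2 [] -> labelling E Val t1 f1 -> labelling E Val t2 f2 ->
  labelling E Val (Node (tvals t1 ++ tvals t2) (tkids t1 ++ tkids t2))
    (fun x => match x with
              | [] => f1 []
              | j :: x' => if j <? length (tkids t1) then f1 x
                           else f2 ((j - length (tkids t1)) :: x')
              end).
Proof.
  intros H0 [He1 Hv1] [He2 Hv2]; split.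
  - intros [|j x] vs ks i a t' Hs Hn.
    + injection Hs as <- <-; simpl.
      destruct (Nat.ltb_spec i (length (tkids t1))).
      * rewrite nth_error_app1 in Hn by assumption.
        apply (He1 [] (tvals t1) (tkids t1) i a t'); [destruct t1 | ]; auto.
      * rewrite nth_error_app2 in Hn by assumption; rewrite H0.
        apply (He2 [] (tvals t2) (tkids t2) _ a t'); [destruct t2 | ]; auto.
    + rewrite subtree_merge in Hs; simpl.
      destruct (j <? length (tkids t1)); [exact (He1 _ _ _ _ _ _ Hs Hn) | exact (He2 _ _ _ _ _ _ Hs Hn)].
  - intros [|j x] vs ks p Hs Hp.
    + injection Hs as <- <-; apply in_app_or in Hp as [Hp|Hp].
      * apply (Hv1 [] (tvals t1) (tkids t1)); [destruct t1 | ]; auto.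
      * rewrite H0; apply (Hv2 [] (tvals t2) (tkids t2)); [destruct t2 | ]; auto.
    + rewrite subtree_merge in Hs; simpl.
      destruct (j <? length (tkids t1)); [exact (Hv1 _ _ _ _ Hs Hp) | exact (Hv2 _ _ _ _ Hs Hp)].
Qed.

Lemma T_labelling (Inv : X -> fml -> Prop) :
  (forall G p, Inv G (Var p) -> Val G p) ->
  (forall G F1 F2, Inv G (And F1 F2) -> Inv G F1 /\ Inv G F2) ->
  (forall G a F, Inv G (Dia a F) -> exists D, E a G D /\ Inv D F) ->
  forall A G, Inv G A -> exists f, f [] = G /\ labelling E Val (T A) f.
Proof.
  intros HVar HAnd HDia A; induction A as [p| |A1 IH1 A2 IH2|a B IH]; intros G HA.
  - exists (fun _ => G); split; auto.
    apply labelling_leaf; intros q [<-|[]]; auto.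
  - exists (fun _ => G); split; auto.
    apply labelling_leaf; intros q [].
  - destruct (HAnd G A1 A2 HA) as [H1 H2].
    destruct (IH1 G H1) as [f1 [<- Hf1]], (IH2 _ H2) as [f2 [Hf2r Hf2]].
    rewrite T_And; eexists; split; [|apply labelling_merge; [symmetry; exact Hf2r | exact Hf1 | exact Hf2]]; reflexivity.
  - destruct (HDia G a B HA) as [D [HGD HD]].
    destruct (IH D HD) as [f [Hf0 Hf]].
    eexists; split; [|apply labelling_dia; [rewrite Hf0; exact HGD | exact Hf]]; reflexivity.
Qed.

End Labellings.

Lemma RCrel_least {X : Type} (S : list modality) (t : tree) (E : modality -> X -> X -> Prop)
  (h : node t -> X) :
  RCframe S E -> (forall a x y, base_edge t a x y -> E a (h x) (h y)) ->
  forall a x y, RCrel S t a x y -> E a (h x) (h y).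
Proof.
  intros HF Hbase a x y H; induction H as [| a b x y z Ha Hb _ IH1 _ IH2
                                          | a b x y z Ha Hb Hba _ IH1 _ IH2 | a b x y Ha Hb Hba _ IH].
  - auto.
  - exact (frame_comp _ _ HF a b _ _ _ Ha Hb IH1 IH2).
  - exact (frame_eucl _ _ HF a b _ _ _ Ha Hb Hba IH1 IH2).
  - exact (frame_incl _ _ HF a b _ _ Ha Hb Hba IH).
Qed.

Lemma labelling_base_edge {X : Type} (E : modality -> X -> X -> Prop) (Val : X -> nat -> Prop)
  (t : tree) (f : list nat -> X) :
  labelling E Val t f ->
  forall a x y, base_edge t a x y -> E a (f (proj1_sig x)) (f (proj1_sig y)).
Proof.
  intros [He _] a x y [i [vs [ks [t' [-> [Hs Hn]]]]]]; exact (He _ _ _ _ _ _ Hs Hn).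
Qed.

Lemma RCrel_label_in (S : list modality) (A : fml) :
  incl (mods A) S -> forall a x y, RCrel S (T A) a x y -> In a S.
Proof.
  intros HA.
  destruct (T_labelling unit (fun a _ _ => In a S) (fun _ _ => True)
              (fun _ F => incl (mods F) S)) with (A := A) (G := tt)
    as [f [_ Hf]]; auto.
  - intros _ F1 F2 H; split; intros u Hu; apply H, in_or_app; auto.
  - intros _ a F H; exists tt; split; [apply H; left; reflexivity |].
    intros u Hu; apply H; right; exact Hu.
  - intros a x y H.
    apply (RCrel_least S (T A) (fun a (_ _ : unit) => In a S) (fun _ => tt)) with (x := x) (y := y).
    + split; auto; intros; apply mmin_in; auto.
    + exact (labelling_base_edge _ _ _ f Hf).
    + exact H.
Qed.

Lemma RCrel_frame (S : list modality) (t : tree) : RCframe S (RCrel S t).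
Proof.
  split; intros.
  - apply rc_comp with y; auto.
  - apply rc_eucl with a x; auto.
  - apply rc_incl with a; auto.
Qed.

Lemma RCw_val_persistent (S : list modality) (A : fml) :
  incl (mods A) S -> omega_persistent (RCrel S (T A)) (RCw_val S A).
Proof.
  intros HA x y p H [Hb | [z [Hz Hbz]]]; right.
  - exists y; auto.
  - assert (Hw : In MOmega S) by exact (RCrel_label_in S A HA _ _ _ H).
    exists z; split; [exact (rc_comp S (T A) MOmega MOmega x y z Hw Hw H Hz) | exact Hbz].
Qed.

Fixpoint tsat (t : tree) (F : fml) : Prop :=
  match F with
  | Var p => In p (tvals t)
  | Top => True
  | And B C => tsat t B /\ tsat t C
  | Dia a B => exists t', In (a, t') (tkids t) /\ tsat t' B
  end.

Lemma tsat_mono (t t' : tree) (F : fml) :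
  incl (tvals t) (tvals t') -> incl (tkids t) (tkids t') -> tsat t F -> tsat t' F.
Proof.
  intros Hv Hk; induction F as [p| |F1 IH1 F2 IH2|a F IH]; simpl; auto.
  - intros [H1 H2]; auto.
  - intros [s [Hi Hs]]; exists s; auto.
Qed.

Lemma tsat_T (F : fml) : tsat (T F) F.
Proof.
  induction F as [p| |F1 IH1 F2 IH2|a F IH]; try (simpl; auto; fail).
  - rewrite T_And; split; eapply tsat_mono; eauto; simpl;
      solve [apply incl_appl, incl_refl | apply incl_appr, incl_refl].
  - exists (T F); split; [left; reflexivity | exact IH].
Qed.

Lemma tsat_forces (t : tree) (R : modality -> node t -> node t -> Prop)
  (V : node t -> nat -> Prop) :
  (forall a x y, base_edge t a x y -> R a x y) -> (forall x p, base_val t x p -> V x p) ->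
  forall F (x : node t) s, subtree t (proj1_sig x) = Some s -> tsat s F -> forces R V x F.
Proof.
  intros HR HV F; induction F as [p| |F1 IH1 F2 IH2|a F IH]; intros x s Hs Ht; simpl in *.
  - apply HV; destruct s as [vs ks]; exists vs, ks; auto.
  - exact I.
  - destruct Ht; split; eauto.
  - destruct s as [vs ks], Ht as [t' [Hi Ht']].
    apply In_nth_error in Hi as [i Hi]; simpl in Hi.
    assert (Hy : subtree t (proj1_sig x ++ [i]) = Some t').
    { rewrite subtree_app, Hs; simpl; rewrite Hi; reflexivity. }
    assert (Hy' : subtree t (proj1_sig x ++ [i]) <> None) by (rewrite Hy; discriminate).
    set (y := exist _ (proj1_sig x ++ [i]) Hy' : node t).
    exists y; split.
    + apply HR; exists i, vs, ks, t'; auto.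
    + exact (IH y t' Hy Ht').
Qed.

(** * Completeness: the canonical model of theories *)

Record closed_theory (G : fml -> Prop) : Prop := {
  th_deriv : forall F H, G F -> deriv F H -> G H;
  th_and : forall F H, G F -> G H -> G (And F H);
  th_top : G Top }.

Record theory_rel (a : modality) (G D : fml -> Prop) : Prop := {
  tr_src : closed_theory G;
  tr_tgt : closed_theory D;
  tr_dia : forall F, D F -> G (Dia a F);
  tr_low : forall b Z, mlt b a -> G (Dia b Z) -> D (Dia b Z) }.

Lemma deriv_dia_min (a b : modality) (F : fml) : deriv (Dia a (Dia b F)) (Dia (mmin a b) F).
Proof.
  destruct (mle_mlt_cases a b) as [H|H].
  - rewrite mmin_l by exact H; apply d_ge2, H.
  - rewrite mmin_r by (right; exact H); apply d_ge1; right; exact H.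
Qed.

Lemma theory_rel_frame (L : list modality) : RCframe L theory_rel.
Proof.
  split.
  - intros a b G D E _ _ [HG _ H1 H2] [_ HE H3 H4]; split; auto.
    + intros F HF; apply (th_deriv _ HG) with (Dia a (Dia b F)); auto; apply deriv_dia_min.
    + intros c Z Hc HZ; apply mlt_mmin in Hc as [Ha Hb]; auto.
  - intros a b G D E _ _ Hba [HG HD H1 H2] [_ HE H3 H4]; split; auto.
    intros c Z Hc HZ; apply H4; auto.
    apply (th_deriv _ HG) with (Dia a (Dia c Z)); [apply H1, HZ |].
    apply d_ge1; right; eapply mlt_trans; eauto.
  - intros a b G D _ _ Hba [HG HD H1 H2]; split; auto.
    + intros F HF; apply (th_deriv _ HG) with (Dia a F); auto; apply d_mon, Hba.
    + intros c Z Hc HZ; apply H2; auto; eapply mlt_trans; eauto.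
Qed.

Inductive low_conj (a : modality) (G : fml -> Prop) : fml -> Prop :=
| lc_top : low_conj a G Top
| lc_dia b Z : mlt b a -> G (Dia b Z) -> low_conj a G (Dia b Z)
| lc_and E1 E2 : low_conj a G E1 -> low_conj a G E2 -> low_conj a G (And E1 E2).

Lemma low_conj_in (a : modality) (G : fml -> Prop) (E : fml) :
  closed_theory G -> low_conj a G E -> G E.
Proof. intros HG H; induction H; auto; [apply th_top | apply th_and]; auto. Qed.

Lemma low_conj_J (a : modality) (G : fml -> Prop) (E : fml) :
  low_conj a G E -> forall B, deriv (And (Dia a B) E) (Dia a (And B E)).
Proof.
  induction 1 as [| b Z Hb _ | E1 E2 _ IH1 _ IH2]; intros B.
  - eapply d_cut; [apply d_andl|]; apply d_mono, d_andi; [apply d_refl | apply d_top].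
  - apply d_j, Hb.
  - apply d_cut with (And (Dia a (And B E1)) E2).
    { apply d_andi; [| eapply d_cut; [apply d_andr | apply d_andr]].
      eapply d_cut; [|apply IH1].
      apply d_andi; [apply d_andl | eapply d_cut; [apply d_andr | apply d_andl]]. }
    eapply d_cut; [apply IH2|]; apply d_mono.
    apply d_andi; [eapply d_cut; [apply d_andl | apply d_andl]|].
    apply d_andi; [eapply d_cut; [apply d_andl | apply d_andr] | apply d_andr].
Qed.

Definition succ_theory (a : modality) (G : fml -> Prop) (B : fml) (F : fml) : Prop :=
  exists E, low_conj a G E /\ deriv (And B E) F.

Lemma succ_theory_rel (a : modality) (G : fml -> Prop) (B : fml) :
  closed_theory G -> G (Dia a B) ->
  theory_rel a G (succ_theory a G B) /\ succ_theory a G B B.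
Proof.
  intros HG HaB.
  assert (HD : closed_theory (succ_theory a G B)).
  { split.
    - intros F H [E [HE HF]] HFH; exists E; split; eauto using d_cut.
    - intros F H [E1 [HE1 HF]] [E2 [HE2 HH]]; exists (And E1 E2); split; [constructor; auto|].
      apply d_andi; [eapply d_cut; [|exact HF] | eapply d_cut; [|exact HH]];
        (apply d_andi; [apply d_andl | eapply d_cut; [apply d_andr|]]);
        [apply d_andl | apply d_andr].
    - exists Top; split; [constructor | apply d_top]. }
  split; [split; auto |].
  - intros F [E [HE HF]].
    apply (th_deriv _ HG) with (Dia a (And B E)); [| apply d_mono, HF].
    apply (th_deriv _ HG) with (And (Dia a B) E); [| eapply low_conj_J; eauto].
    apply th_and; auto; eapply low_conj_in; eauto.
  - intros b Z Hb HZ; exists (Dia b Z); split; [constructor; auto | apply d_andr].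
  - exists Top; split; [constructor | apply d_andl].
Qed.

Lemma theory_truth (B : fml) : forall G, closed_theory G ->
  forces theory_rel (fun G p => G (Var p)) G B -> G B.
Proof.
  induction B as [p| |B1 IH1 B2 IH2|a B IH]; simpl; intros G HG H.
  - exact H.
  - apply th_top, HG.
  - destruct H; apply (th_and _ HG); [apply IH1 | apply IH2]; auto.
  - destruct H as [D [HR HD]]; apply (tr_dia _ _ _ HR), IH; auto; apply (tr_tgt _ _ _ HR).
Qed.

Lemma forces_hom {W W' : Type} (R : modality -> W -> W -> Prop) (V : W -> nat -> Prop)
  (R' : modality -> W' -> W' -> Prop) (V' : W' -> nat -> Prop) (h : W -> W') :
  (forall a x y, R a x y -> R' a (h x) (h y)) -> (forall x p, V x p -> V' (h x) p) ->
  forall F x, forces R V x F -> forces R' V' (h x) F.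
Proof.
  intros HR HV F; induction F as [p| |F1 IH1 F2 IH2|a F IH]; simpl; intros x Hx; auto.
  - destruct Hx; split; auto.
  - destruct Hx as [y [Hy HF]]; exists (h y); split; auto.
Qed.

Lemma completeness (S : list modality) (A B : fml) :
  forces (RCrel S (T A)) (RCw_val S A) (root (T A)) B -> deriv A B.
Proof.
  intros H.
  assert (HG : closed_theory (deriv A)) by (split; eauto using d_cut, d_andi, d_top).
  destruct (T_labelling _ theory_rel (fun G p => G (Var p))
              (fun G F => closed_theory G /\ G F)) with (A := A) (G := deriv A)
    as [f [Hf0 Hf]]; auto using d_refl.
  - intros G p [_ Hp]; exact Hp.
  - intros G F1 F2 [HG' HF]; split; split; auto;
      [apply (th_deriv _ HG' _ _ HF), d_andl | apply (th_deriv _ HG' _ _ HF), d_andr].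
  - intros G a F [HG' HF]; destruct (succ_theory_rel a G F HG' HF) as [HR HD].
    exists (succ_theory a G F); split; auto; split; auto; apply (tr_tgt _ _ _ HR).
  - set (h := fun x : node (T A) => f (proj1_sig x)).
    assert (Hhom : forall a x y, RCrel S (T A) a x y -> theory_rel a (h x) (h y)).
    { apply RCrel_least; [apply theory_rel_frame | exact (labelling_base_edge _ _ _ f Hf)]. }
    assert (Hval : forall x p, RCw_val S A x p -> h x (Var p)).
    { assert (Hbase : forall x p, base_val (T A) x p -> h x (Var p))
        by (intros x p [vs [ks [Hs Hp]]]; exact (proj2 Hf _ _ _ _ Hs Hp)).
      intros x p [Hb | [y [Hy Hb]]]; [exact (Hbase x p Hb)|].
      destruct (Hhom _ _ _ Hy) as [Hx _ Hdia _].
      apply (th_deriv _ Hx) with (Dia MOmega (Var p)); [apply Hdia, Hbase, Hb | apply d_omega]. }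
    rewrite <- Hf0; apply theory_truth; [rewrite Hf0; exact HG |].
    exact (forces_hom _ _ _ _ h Hhom Hval B (root (T A)) H).
Qed.

Theorem theorem5p5 (A B : fml) :
  deriv A B <->
  forces (RCrel (mods A ++ mods B) (T A)) (RCw_val (mods A ++ mods B) A)
         (root (T A)) B.
Proof.
  set (S := mods A ++ mods B).
  assert (HiA : incl (mods A) S) by apply incl_appl, incl_refl.
  assert (HiB : incl (mods B) S) by apply incl_appr, incl_refl.
  split; [| apply completeness].
  intros Hd; destruct (soundness A B Hd) as [L HL].
  apply (entails_RCS_model L S _ _ A B HL (RCrel_frame S (T A)) (RCw_val_persistent S A HiA)
           HiA HiB).
  (* The root of the canonical model forces A itself. *)
  apply (tsat_forces (T A)) with (s := T A); [| | reflexivity | apply tsat_T].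
  - intros a x y Hxy; apply rc_base, Hxy.
  - intros x p Hp; left; exact Hp.
Qed.
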